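(* Let $G$ be a finite group, $T$ a $G$-Tambara functor, $a\in T(G/H_1)$ and $b\in T(G/H_2)$. Then the product $\langle a\rangle\langle b\rangle$ is generated as a Tambara ideal by the set of all generalized products of $a$ and $b$.
   Context: All rings are commutative with unit. A $G$-Tambara functor $T$ consists of commutative rings $T(G/H)$ for subgroups $H\le G$, restriction ring maps $r^H_K$, additive transfers $t^H_K$, multiplicative norms $N^H_K$ ($K\le H$) and conjugation isomorphisms $c_{g,H}\colon T(G/H)\to T(G/gHg^{-1})$ satisfying the standard Tambara axioms (Hill–Mazur). A Tambara ideal is a family of ring ideals $I(G/H)\subseteq T(G/H)$ closed under restriction, transfer, norm and conjugation; $\langle x\rangle$ is the smallest Tambara ideal containing $x$ at its level. The product $IJ$ is the Tambara ideal generated by the levelwise products $I(G/H)J(G/H)$. A multiplicative translate of $x\in T(G/H)$ into $T(G/L)$ is an element $N^L_{gKg^{-1}}(c_{g,K}(r^H_K(x)))$ for some $K\le H$ and $g\in G$ with $gKg^{-1}\le L$. A generalized product of $x\in T(G/H_1)$ and $y\in T(G/H_2)$ is a product $\mu\nu\in T(G/L)$, for some $L\le G$, where $\mu$, $\nu$ are multiplicative translates of $x$, $y$ into $T(G/L)$. *)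

From HB Require Import structures.
From mathcomp Require Import all_boot all_order all_algebra all_fingroup.
Set Implicit Arguments. Unset Strict Implicit. Unset Printing Implicit Defensive.
Import GRing.Theory.

Local Open Scope ring_scope.

Section Tambara.
Variable gT : finGroupType.

Definition pickd (X : finType) (x0 : X) (A : {set X}) : X := odflt x0 [pick x in A].

(* the conjugate group g K g^-1 (mathcomp's  K :^ y  is  y^-1 K y) *)
Definition cgrp (g : gT) (K : {group gT}) : {group gT} := (K :^ (g^-1)%g)%G.

Definition dcosets (J K H : {set gT}) : {set {set gT}} :=
  [set ((J :* g) * K)%g | g in H].

(* ---- combinatorics of the Tambara reciprocity (exponential) formula ----
   For K <= H and a family L_i <= K (i < n), the G-set A = |_|_i G/L_i maps
   to G/K; a section over the fibre H/K of G/K -> G/H assigns to each left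
   coset C = hK of K in H a pair (i, D) with D a left coset of L_i inside C.
   Sections are encoded as finite functions on {set gT} (None off H/K).   *)
Definition secT n := {ffun {set gT} -> option ('I_n * {set gT})}.

Definition is_sec n (H K : {set gT}) (L : 'I_n -> {group gT}) (s : secT n) : bool :=
  [forall C, match s C with
             | Some p => [&& C \in lcosets K H, p.2 \in lcosets (L p.1) H
                           & p.2 \subset C]
             | None => C \notin lcosets K H
             end].

Definition sec_act n (h : gT) (s : secT n) : secT n :=
  [ffun C => omap (fun p => (p.1, (h *: p.2)%g)) (s ((h^-1) *: C)%g)].

Definition secs n H K (L : 'I_n -> {group gT}) : {set secT n} :=
  [set s | is_sec H K L s].

Definition sec_orbits n (H K : {set gT}) (L : 'I_n -> {group gT}) : {set {set secT n}} :=
  [set [set sec_act h s | h in H] | s in secs H K L].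

(* stabilizer of a section in H (a subgroup; <<_>> just provides the group
   structure, it does not change the set) *)
Definition sec_stab n (H : {set gT}) (s : secT n) : {group gT} :=
  (<< [set h in H | sec_act h s == s] >>)%G.

Definition coset_orbits (S K H : {set gT}) : {set {set {set gT}}} :=
  [set [set (x *: C)%g | x in S] | C in lcosets K H].

Record tambara_data := TambaraData {
  T :> {group gT} -> comPzRingType;
  (* res H K = r^H_K : T(G/H) -> T(G/K); meaningful when K <= H *)
  res : forall H K : {group gT}, T H -> T K;
  (* tr H K = t^H_K : T(G/K) -> T(G/H); meaningful when K <= H *)
  tr : forall H K : {group gT}, T K -> T H;
  (* nm H K = N^H_K : T(G/K) -> T(G/H); meaningful when K <= H *)
  nm : forall H K : {group gT}, T K -> T H;
  (* cj g H K = c_{g,H} : T(G/H) -> T(G/gHg^-1); meaningful when K = gHg^-1 *)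
  cj : gT -> forall H K : {group gT}, T H -> T K
}.
Arguments res : clear implicits.
Arguments tr : clear implicits.
Arguments nm : clear implicits.
Arguments cj : clear implicits.

Variable G : {group gT}.
Implicit Types (H K J : {group gT}) (g h : gT).

Section TAx.
Variable Tf : tambara_data.
Local Notation T := (T Tf).
Local Notation res := (@res Tf).
Local Notation tr := (@tr Tf).
Local Notation nm := (@nm Tf).
Local Notation cj := (@cj Tf).

(* the summand of the reciprocity formula attached to an S-orbit Om of H/K *)
Definition recip_factor n (L : 'I_n -> {group gT}) (a : forall i, T (L i))
    (S : {group gT}) (s : secT n) (Om : {set {set gT}}) : T S :=
  match s (pickd set0 Om) with
  | Some p =>
      let g := repr p.2 in
      nm S (S :&: cgrp g (L p.1))%G
        (res (cgrp g (L p.1)) (S :&: cgrp g (L p.1))%G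
           (cj g (L p.1) (cgrp g (L p.1)) (a p.1)))
  | None => 1
  end.

Definition tambara_axioms : Prop :=
  (forall H K, K \subset H -> H \subset G ->
     [/\ forall x y, res H K (x + y) = res H K x + res H K y,
         forall x y, res H K (x * y) = res H K x * res H K y
       & res H K 1 = 1]) /\
  (forall H (x : T H), H \subset G -> res H H x = x) /\
  (forall H K J x, J \subset K -> K \subset H -> H \subset G ->
     res K J (res H K x) = res H J x) /\
  (forall H K, K \subset H -> H \subset G ->
     forall x y, tr H K (x + y) = tr H K x + tr H K y) /\
  (forall H (x : T H), H \subset G -> tr H H x = x) /\
  (forall H K J x, J \subset K -> K \subset H -> H \subset G ->
     tr H K (tr K J x) = tr H J x) /\
  (forall H K, K \subset H -> H \subset G ->
     (forall x y, nm H K (x * y) = nm H K x * nm H K y) /\ nm H K 1 = 1) /\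
  (forall H (x : T H), H \subset G -> nm H H x = x) /\
  (forall H K J x, J \subset K -> K \subset H -> H \subset G ->
     nm H K (nm K J x) = nm H J x) /\
  (forall g H, g \in G -> H \subset G ->
     [/\ forall x y, cj g H (cgrp g H) (x + y) = cj g H (cgrp g H) x + cj g H (cgrp g H) y,
         forall x y, cj g H (cgrp g H) (x * y) = cj g H (cgrp g H) x * cj g H (cgrp g H) y
       & cj g H (cgrp g H) 1 = 1]) /\
  (forall g H (x : T H), H \subset G -> g \in H -> cj g H H x = x) /\
  (forall g h H x, g \in G -> h \in G -> H \subset G ->
     cj g (cgrp h H) (cgrp g (cgrp h H)) (cj h H (cgrp h H) x)
     = cj (g * h)%g H (cgrp g (cgrp h H)) x) /\
  (forall g H K x, g \in G -> K \subset H -> H \subset G ->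
     cj g K (cgrp g K) (res H K x) = res (cgrp g H) (cgrp g K) (cj g H (cgrp g H) x)) /\
  (forall g H K x, g \in G -> K \subset H -> H \subset G ->
     cj g H (cgrp g H) (tr H K x) = tr (cgrp g H) (cgrp g K) (cj g K (cgrp g K) x)) /\
  (forall g H K x, g \in G -> K \subset H -> H \subset G ->
     cj g H (cgrp g H) (nm H K x) = nm (cgrp g H) (cgrp g K) (cj g K (cgrp g K) x)) /\
  (forall H J K x, J \subset H -> K \subset H -> H \subset G ->
     res H J (tr H K x) =
     \sum_(D in dcosets J K H)
        tr J (J :&: cgrp (repr D) K)%G
          (res (cgrp (repr D) K) (J :&: cgrp (repr D) K)%G
             (cj (repr D) K (cgrp (repr D) K) x))) /\
  (forall H J K x, J \subset H -> K \subset H -> H \subset G ->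
     res H J (nm H K x) =
     \prod_(D in dcosets J K H)
        nm J (J :&: cgrp (repr D) K)%G
          (res (cgrp (repr D) K) (J :&: cgrp (repr D) K)%G
             (cj (repr D) K (cgrp (repr D) K) x))) /\
  (forall H K x y, K \subset H -> H \subset G ->
     tr H K (x * res H K y) = tr H K x * y) /\
  (* Tambara reciprocity (distributive law along exponential diagrams):
     N^H_K (sum_i t^K_{L_i} a_i) =
       sum_{[s] in H\Sections} t^H_{S_s} prod_{[C] in S_s\(H/K)}
          N^{S_s}_{S_s \cap gL_ig^-1} r c_g (a_i)   where s(C) = (i, gL_i) *)
  (forall H K n (L : 'I_n -> {group gT}) (a : forall i, T (L i)),
     K \subset H -> H \subset G -> (forall i, L i \subset K) ->
     nm H K (\sum_(i < n) tr K (L i) (a i)) =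
     \sum_(O in sec_orbits H K L)
        tr H (sec_stab H (pickd [ffun=> None] O))
          (\prod_(Om in coset_orbits (sec_stab H (pickd [ffun=> None] O)) K H)
             recip_factor a (sec_stab H (pickd [ffun=> None] O))
               (pickd [ffun=> None] O) Om)).

End TAx.

Record tambara := Tambara {
  tambara_d :> tambara_data;
  tambara_ax : tambara_axioms tambara_d
}.

Section Ideals.
Variable Tf : tambara.
Local Notation T := (T Tf).
Local Notation res := (@res Tf).
Local Notation tr := (@tr Tf).
Local Notation nm := (@nm Tf).
Local Notation cj := (@cj Tf).

Definition tfamily := forall H : {group gT}, T H -> Prop.

Definition ring_ideal (R : comPzRingType) (P : R -> Prop) : Prop :=
  [/\ P 0, forall x y, P x -> P y -> P (x + y) & forall r x, P x -> P (r * x)].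

Definition tambara_ideal (I : tfamily) : Prop :=
  [/\ forall H, H \subset G -> ring_ideal (I H),
      forall H K x, K \subset H -> H \subset G -> I H x -> I K (res H K x),
      forall H K x, K \subset H -> H \subset G -> I K x -> I H (tr H K x),
      forall H K x, K \subset H -> H \subset G -> I K x -> I H (nm H K x)
    & forall g H x, g \in G -> H \subset G -> I H x -> I (cgrp g H) (cj g H (cgrp g H) x)].

Definition tideal_gen (S : tfamily) : tfamily :=
  fun H z => forall I, tambara_ideal I ->
    (forall K, K \subset G -> forall x, S K x -> I K x) -> I H z.

Definition tideal_prin (H0 : {group gT}) (x : T H0) : tfamily :=
  fun H z => forall I, tambara_ideal I -> I H0 x -> I H z.

Definition tideal_prod (I J : tfamily) : tfamily :=
  tideal_gen (fun H z => exists n (u v : 'I_n -> T H),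
                (forall k, I H (u k) /\ J H (v k)) /\ z = \sum_(k < n) u k * v k).

Definition mult_translate (H : {group gT}) (x : T H) (L : {group gT}) (m : T L) : Prop :=
  exists (K : {group gT}) (g : gT),
    [/\ K \subset H, g \in G, cgrp g K \subset L &
        m = nm L (cgrp g K) (cj g K (cgrp g K) (res H K x))].

Definition gen_products (H1 : {group gT}) (x : T H1) (H2 : {group gT}) (y : T H2) : tfamily :=
  fun L z => L \subset G /\ exists mu nu,
    [/\ mult_translate x mu, mult_translate y nu & z = mu * nu].

End Ideals.
End Tambara.

Arguments tideal_gen {gT G Tf} S H _.
Arguments tideal_prin {gT G Tf H0} x H _.
Arguments tideal_prod {gT G Tf} I J H _.
Arguments gen_products {gT G Tf H1} x {H2} y H _.

From mathcomp Require Import all_boot all_order all_algebra all_fingroup.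
Set Implicit Arguments. Unset Strict Implicit. Unset Printing Implicit Defensive.
Import GRing.Theory.
Local Open Scope ring_scope.

(** The principal ideal <x> has an explicit description: at level K it
   consists of the sums of transfers t^K_L(m r) with r arbitrary and m a
   product of multiplicative translates of x.  This family contains x and is
   a Tambara ideal: Frobenius reciprocity makes it an ideal, the additive
   Mackey formula keeps it stable under restriction (restricting a translate
   gives a product of translates by the multiplicative Mackey formula), and
   Tambara reciprocity keeps it stable under norms.  Hence for u in <a> and
   v in <b>, Frobenius reciprocity writes u v as a sum of transfers of
   elements r m m', where m m' is a product of translates of a and of b, i.e.
   a multiple of a generalized product.  Conversely the translates of a lie
   in <a>, so every generalized product lies in <a><b>. *)

Lemma ring_ideal_sum (R : comPzRingType) (P : R -> Prop) n (F : 'I_n -> R) :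
  ring_ideal P -> (forall i, P (F i)) -> P (\sum_(i < n) F i).
Proof. by case=> P0 PD _ PF; apply: big_ind. Qed.

Section TambaraIdealProducts.
Variables (gT : finGroupType) (G : {group gT}) (Tf : tambara G).
Implicit Types (H K J L S : {group gT}) (g c : gT).
Local Notation res H K := (@res gT Tf H K).
Local Notation tr H K := (@tr gT Tf H K).
Local Notation nm H K := (@nm gT Tf H K).
Local Notation cj g H K := (@cj gT Tf g H K).

Local Ltac tambara_axioms :=
  case: (tambara_ax Tf) => ax_res [ax_res_id [ax_res_comp [ax_trD [ax_tr_id
    [ax_tr_comp [ax_nm [ax_nm_id [ax_nm_comp [ax_cj [ax_cj_inner [ax_cj_comp
    [ax_cj_res [ax_cj_tr [ax_cj_nm [ax_mackey_tr [ax_mackey_nm [ax_frobenius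
    ax_reciprocity]]]]]]]]]]]]]]]]].

Section TambaraLaws.
Variables (H K J : {group gT}) (g h : gT).
Hypotheses (sKH : K \subset H) (sHG : H \subset G) (gG : g \in G).

Lemma resD (x y : Tf H) : res H K (x + y) = res H K x + res H K y.
Proof. by tambara_axioms; case: (ax_res H K sKH sHG). Qed.

Lemma resM (x y : Tf H) : res H K (x * y) = res H K x * res H K y.
Proof. by tambara_axioms; case: (ax_res H K sKH sHG). Qed.

Lemma res0 : res H K 0 = 0.
Proof. by apply: (addrI (res H K 0)); rewrite -resD !addr0. Qed.

Lemma res_id (x : Tf H) : res H H x = x.
Proof. by tambara_axioms; apply: ax_res_id. Qed.

Lemma res_comp (x : Tf H) : J \subset K -> res K J (res H K x) = res H J x.
Proof. by tambara_axioms => sJK; apply: ax_res_comp. Qed.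

Lemma trD (x y : Tf K) : tr H K (x + y) = tr H K x + tr H K y.
Proof. by tambara_axioms; apply: ax_trD. Qed.

Lemma tr0 : tr H K 0 = 0.
Proof. by apply: (addrI (tr H K 0)); rewrite -trD !addr0. Qed.

Lemma tr_id (x : Tf H) : tr H H x = x.
Proof. by tambara_axioms; apply: ax_tr_id. Qed.

Lemma tr_comp (x : Tf J) : J \subset K -> tr H K (tr K J x) = tr H J x.
Proof. by tambara_axioms => sJK; apply: ax_tr_comp. Qed.

Lemma nmM (x y : Tf K) : nm H K (x * y) = nm H K x * nm H K y.
Proof. by tambara_axioms; case: (ax_nm H K sKH sHG). Qed.

Lemma nm_id (x : Tf H) : nm H H x = x.
Proof. by tambara_axioms; apply: ax_nm_id. Qed.

Lemma nm_comp (x : Tf J) : J \subset K -> nm H K (nm K J x) = nm H J x.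
Proof. by tambara_axioms => sJK; apply: ax_nm_comp. Qed.

Lemma cjD (x y : Tf H) :
  cj g H (cgrp g H) (x + y) = cj g H (cgrp g H) x + cj g H (cgrp g H) y.
Proof. by tambara_axioms; case: (ax_cj g H gG sHG). Qed.

Lemma cjM (x y : Tf H) :
  cj g H (cgrp g H) (x * y) = cj g H (cgrp g H) x * cj g H (cgrp g H) y.
Proof. by tambara_axioms; case: (ax_cj g H gG sHG). Qed.

Lemma cj0 : cj g H (cgrp g H) 0 = 0.
Proof. by apply: (addrI (cj g H (cgrp g H) 0)); rewrite -cjD !addr0. Qed.

Lemma cj_inner (x : Tf H) : g \in H -> cj g H H x = x.
Proof. by tambara_axioms => gH; apply: ax_cj_inner. Qed.

Lemma cj_comp (x : Tf H) : h \in G ->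
  cj g (cgrp h H) (cgrp g (cgrp h H)) (cj h H (cgrp h H) x)
  = cj (g * h)%g H (cgrp g (cgrp h H)) x.
Proof. by tambara_axioms => hG; apply: ax_cj_comp. Qed.

Lemma cj_res (x : Tf H) :
  cj g K (cgrp g K) (res H K x) = res (cgrp g H) (cgrp g K) (cj g H (cgrp g H) x).
Proof. by tambara_axioms; apply: ax_cj_res. Qed.

Lemma cj_tr (x : Tf K) :
  cj g H (cgrp g H) (tr H K x) = tr (cgrp g H) (cgrp g K) (cj g K (cgrp g K) x).
Proof. by tambara_axioms; apply: ax_cj_tr. Qed.

Lemma cj_nm (x : Tf K) :
  cj g H (cgrp g H) (nm H K x) = nm (cgrp g H) (cgrp g K) (cj g K (cgrp g K) x).
Proof. by tambara_axioms; apply: ax_cj_nm. Qed.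

Lemma mackey_tr (x : Tf K) : J \subset H ->
  res H J (tr H K x) =
  \sum_(D in dcosets J K H)
     tr J (J :&: cgrp (repr D) K)%G
       (res (cgrp (repr D) K) (J :&: cgrp (repr D) K)%G
          (cj (repr D) K (cgrp (repr D) K) x)).
Proof. by tambara_axioms => sJH; apply: ax_mackey_tr. Qed.

Lemma mackey_nm (x : Tf K) : J \subset H ->
  res H J (nm H K x) =
  \prod_(D in dcosets J K H)
     nm J (J :&: cgrp (repr D) K)%G
       (res (cgrp (repr D) K) (J :&: cgrp (repr D) K)%G
          (cj (repr D) K (cgrp (repr D) K) x)).
Proof. by tambara_axioms => sJH; apply: ax_mackey_nm. Qed.

Lemma frobenius (x : Tf K) (y : Tf H) : tr H K (x * res H K y) = tr H K x * y.
Proof. by tambara_axioms; apply: ax_frobenius. Qed.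

Lemma reciprocity n (Ls : 'I_n -> {group gT}) (a : forall i, Tf (Ls i)) :
  (forall i, Ls i \subset K) ->
  nm H K (\sum_(i < n) tr K (Ls i) (a i)) =
  \sum_(O in sec_orbits H K Ls)
     tr H (sec_stab H (pickd [ffun=> None] O))
       (\prod_(Om in coset_orbits (sec_stab H (pickd [ffun=> None] O)) K H)
          recip_factor a (sec_stab H (pickd [ffun=> None] O))
            (pickd [ffun=> None] O) Om).
Proof. by tambara_axioms => sLK; apply: ax_reciprocity. Qed.

End TambaraLaws.

Lemma cgrp1 H : cgrp 1%g H = H.
Proof. by apply: val_inj; rewrite /= invg1 conjsg1. Qed.

Lemma cgrpM g c H : cgrp g (cgrp c H) = cgrp (g * c)%g H.
Proof. by apply: val_inj; rewrite /= -conjsgM invMg. Qed.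

Lemma cgrpVK c H : cgrp c (cgrp c^-1 H) = H.
Proof. by apply: val_inj; rewrite /= invgK conjsgK. Qed.

Lemma cgrpS g H K : (cgrp g H \subset cgrp g K) = (H \subset K).
Proof. exact: conjSg. Qed.

Lemma cgrp_subG g H : g \in G -> H \subset G -> cgrp g H \subset G.
Proof. by move=> gG sHG; rewrite /= sub_conjg invgK conjGid. Qed.

Lemma repr_dcosets J K L D :
  J \subset L -> K \subset L -> D \in dcosets J K L -> repr D \in L.
Proof.
move=> sJL sKL /imsetP[g gL ->].
have : repr (J :* g * K)%g \in (J :* g * K)%g.
  apply: (mem_repr g); rewrite -[g]mulg1; apply: mem_mulg => //.
  by rewrite mulg1 rcoset_refl.
case/mulsgP=> _ k /rcosetP[j Jj ->] Kk ->.
by rewrite !groupM //; [exact: (subsetP sJL) | exact: (subsetP sKL)].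
Qed.

Lemma coset_orbits_pick S K H Om :
  S \subset H -> Om \in coset_orbits S K H -> pickd set0 Om \in lcosets K H.
Proof.
move=> sSH /imsetP[C /lcosetsP[y yH ->] ->].
rewrite /pickd; case: pickP => [C' /imsetP[s sS ->] | /(_ (1 *: (y *: K))%g)].
  rewrite -lcosetM; apply/lcosetsP; exists (s * y)%g => //.
  exact: groupM (subsetP sSH _ sS) yH.
by rewrite (imset_f (fun x => x *: (y *: K))%g (group1 S)).
Qed.

Lemma sec_orbits_pick n H K (Ls : 'I_n -> {group gT}) O C :
  K \subset H -> (forall i, Ls i \subset K) -> O \in sec_orbits H K Ls ->
  C \in lcosets K H ->
  exists2 p, pickd [ffun=> None] O C = Some p & repr p.2 \in H.
Proof.
move=> sKH sLK /imsetP[s0]; rewrite inE => s0sec -> /lcosetsP[y yH ->].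
rewrite /pickd; case: pickP => [s /imsetP[h hH ->] | /(_ (sec_act 1%g s0))]; last first.
  by rewrite (imset_f (fun h => sec_act h s0) (group1 H)).
rewrite /sec_act ffunE -lcosetM.
have hyC : ((h^-1 * y) *: K)%g \in lcosets K H.
  by apply/lcosetsP; exists (h^-1 * y)%g; rewrite // groupM ?groupV.
move/forallP: s0sec => /(_ ((h^-1 * y) *: K)%g).
case: (s0 _) => [[i D]|] /=; last by rewrite hyC.
case/and3P=> _ /lcosetsP[y' y'H ->] _.
exists (i, h *: (y' *: Ls i))%g => //=; rewrite -lcosetM.
have /lcosetP[w wL ->] := mem_repr _ (lcoset_refl (Ls i) (h * y')%g).
by rewrite !groupM // (subsetP (subset_trans (sLK i) sKH)).
Qed.

Lemma recip_factorM n (Ls : 'I_n -> {group gT}) (u v : forall i, Tf (Ls i)) S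
    (s : secT gT n) Om p :
  S \subset G -> (forall i, Ls i \subset G) ->
  s (pickd set0 Om) = Some p -> repr p.2 \in G ->
  recip_factor (fun i => u i * v i) S s Om = recip_factor u S s Om * recip_factor v S s Om.
Proof.
move=> sSG sLG sp gG; rewrite /recip_factor sp /=.
by rewrite cjM // resM ?nmM ?subsetIl ?subsetIr ?cgrp_subG.
Qed.

Section Translates.
Variables (H0 : {group gT}) (x : Tf H0).
Hypothesis sH0G : H0 \subset G.

Lemma mult_translate_id : mult_translate x x.
Proof. by exists H0, 1%g; rewrite cgrp1 nm_id // cj_inner // res_id. Qed.

Lemma mult_translate_nm K L (m : Tf L) :
  L \subset K -> K \subset G -> mult_translate x m -> mult_translate x (nm K L m).
Proof.
move=> sLK sKG [K' [g [sK'H0 gG sgK'L ->]]].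
by exists K', g; rewrite (subset_trans sgK'L) // nm_comp.
Qed.

Lemma mult_translate_cj c L (m : Tf L) :
  c \in G -> L \subset G -> mult_translate x m -> mult_translate x (cj c L (cgrp c L) m).
Proof.
move=> cG sLG [K [g [sKH0 gG sgKL ->]]].
have sKG := subset_trans sKH0 sH0G.
exists K, (c * g)%g; rewrite groupM // -cgrpM cgrpS.
by rewrite cj_nm ?cgrp_subG // cj_comp.
Qed.

Lemma mult_translate_mackey c K J : c \in G -> K \subset H0 -> J \subset G ->
  mult_translate x (nm J (J :&: cgrp c K)%G
    (res (cgrp c K) (J :&: cgrp c K)%G (cj c K (cgrp c K) (res H0 K x)))).
Proof.
move=> cG sKH0 sJG; set Y := (J :&: cgrp c K)%G.
have sYJ : Y \subset J by rewrite subsetIl.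
have sYcK : Y \subset cgrp c K by rewrite subsetIr.
have sK1K : cgrp c^-1 Y \subset K by rewrite -(cgrpS c) cgrpVK.
have sKG := subset_trans sKH0 sH0G.
exists (cgrp c^-1 Y), c; split=> //; first exact: subset_trans sK1K sKH0.
  by rewrite cgrpVK.
by rewrite -(res_comp sKH0 sH0G x sK1K) (cj_res sK1K sKG cG) cgrpVK.
Qed.

Inductive translate_prod L : Tf L -> Prop :=
| tp_translate (m : Tf L) : mult_translate x m -> translate_prod m
| tp_mul (u v : Tf L) : translate_prod u -> translate_prod v -> translate_prod (u * v).

Lemma translate_prod_big (I : finType) (A : {set I}) L (F : I -> Tf L) :
  A != set0 -> (forall i, i \in A -> translate_prod (F i)) ->
  translate_prod (\prod_(i in A) F i).
Proof.
case/set0Pn=> i0 i0A tpF; rewrite (bigD1 i0) //=.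
elim/big_rec: _ => [|i z /andP[iA _] tpz]; first by rewrite mulr1; apply: tpF.
by rewrite mulrCA; apply: tp_mul tpz; apply: tpF.
Qed.

Lemma translate_prod_res_translate L J (m : Tf L) : J \subset L -> L \subset G ->
  mult_translate x m -> translate_prod (res L J m).
Proof.
move=> sJL sLG [K [g [sKH0 gG sgKL ->]]].
have sKG := subset_trans sKH0 sH0G.
rewrite mackey_nm ?cgrp_subG //; apply: translate_prod_big => [|D DJL].
  by apply/set0Pn; exists (J :* 1 * cgrp g K)%g; apply: imset_f.
have dL := repr_dcosets sJL sgKL DJL.
have dG : repr D \in G := subsetP sLG _ dL.
rewrite cj_comp ?cgrp_subG // cgrpM.
by apply/tp_translate/mult_translate_mackey; rewrite ?groupM ?(subset_trans sJL).
Qed.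

Lemma translate_prod_res L J (m : Tf L) : J \subset L -> L \subset G ->
  translate_prod m -> translate_prod (res L J m).
Proof.
move=> sJL sLG; elim=> [u /(translate_prod_res_translate sJL sLG) // | u v _ tpu _ tpv].
by rewrite resM //; apply: tp_mul.
Qed.

Lemma translate_prod_cj c L (m : Tf L) : c \in G -> L \subset G ->
  translate_prod m -> translate_prod (cj c L (cgrp c L) m).
Proof.
move=> cG sLG; elim=> [u /(mult_translate_cj cG sLG)/tp_translate // | u v _ tpu _ tpv].
by rewrite cjM //; apply: tp_mul.
Qed.

Lemma translate_prod_nm K L (m : Tf L) : L \subset K -> K \subset G ->
  translate_prod m -> translate_prod (nm K L m).
Proof.
move=> sLK sKG; elim=> [u /(mult_translate_nm sLK sKG)/tp_translate // | u v _ tpu _ tpv].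
by rewrite nmM //; apply: tp_mul.
Qed.

Lemma recip_factor_translate n (Ls : 'I_n -> {group gT}) (m : forall i, Tf (Ls i)) S
    (s : secT gT n) Om p :
  S \subset G -> (forall i, Ls i \subset G) -> (forall i, translate_prod (m i)) ->
  s (pickd set0 Om) = Some p -> repr p.2 \in G ->
  translate_prod (recip_factor m S s Om).
Proof.
move=> sSG sLG tpm sp gG; rewrite /recip_factor sp.
apply: translate_prod_nm; rewrite ?subsetIl //.
by apply: translate_prod_res; rewrite ?subsetIr ?cgrp_subG //; apply: translate_prod_cj.
Qed.

Inductive translate_ideal K : Tf K -> Prop :=
| ti0 : translate_ideal 0
| tiD (u v : Tf K) : translate_ideal u -> translate_ideal v -> translate_ideal (u + v)
| tiT L (m r : Tf L) : L \subset K -> translate_prod m -> translate_ideal (tr K L (m * r)).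

Lemma translate_ideal_sum K (I : Type) (idx : seq I) (P : pred I) (F : I -> Tf K) :
  (forall i, P i -> translate_ideal (F i)) -> translate_ideal (\sum_(i <- idx | P i) F i).
Proof. by move=> tiF; apply: big_ind => //; [apply: ti0 | apply: tiD]. Qed.

Lemma translate_ideal_id : translate_ideal x.
Proof.
rewrite -[x]mulr1 -[_ * 1](tr_id sH0G).
by apply: tiT => //; apply/tp_translate/mult_translate_id.
Qed.

Lemma translate_idealMl K (r z : Tf K) : K \subset G ->
  translate_ideal z -> translate_ideal (r * z).
Proof.
move=> sKG; elim=> [|u v _ tiu _ tiv|L m s sLK tpm].
- by rewrite mulr0; apply: ti0.
- by rewrite mulrDr; apply: tiD.
- by rewrite mulrC -frobenius // -mulrA; apply: tiT.
Qed.

Lemma translate_ideal_res K J (z : Tf K) : J \subset K -> K \subset G ->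
  translate_ideal z -> translate_ideal (res K J z).
Proof.
move=> sJK sKG; elim=> [|u v _ tiu _ tiv|L m s sLK tpm].
- by rewrite res0 //; apply: ti0.
- by rewrite resD //; apply: tiD.
have sLG := subset_trans sLK sKG.
rewrite mackey_tr //; apply: translate_ideal_sum => D DJK.
have dG : repr D \in G := subsetP sKG _ (repr_dcosets sJK sLK DJK).
rewrite cjM // resM ?subsetIr ?cgrp_subG //; apply: tiT; first exact: subsetIl.
by apply: translate_prod_res; rewrite ?subsetIr ?cgrp_subG //; apply: translate_prod_cj.
Qed.

Lemma translate_ideal_tr H K (z : Tf K) : K \subset H -> H \subset G ->
  translate_ideal z -> translate_ideal (tr H K z).
Proof.
move=> sKH sHG; elim=> [|u v _ tiu _ tiv|L m s sLK tpm].
- by rewrite tr0 //; apply: ti0.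
- by rewrite trD //; apply: tiD.
- by rewrite tr_comp //; apply: tiT; rewrite ?(subset_trans sLK).
Qed.

Lemma translate_ideal_cj c K (z : Tf K) : c \in G -> K \subset G ->
  translate_ideal z -> translate_ideal (cj c K (cgrp c K) z).
Proof.
move=> cG sKG; elim=> [|u v _ tiu _ tiv|L m s sLK tpm].
- by rewrite cj0 //; apply: ti0.
- by rewrite cjD //; apply: tiD.
have sLG := subset_trans sLK sKG.
rewrite cj_tr // cjM //; apply: tiT; first by rewrite cgrpS.
exact: translate_prod_cj.
Qed.

(* Tambara reciprocity applies to a whole sum of transfers indexed by an
   ordinal, so an element of [translate_ideal] is first put in that form. *)
Lemma translate_ideal_family K (z : Tf K) : translate_ideal z ->
  exists n (Ls : 'I_n -> {group gT}) (m r : forall i, Tf (Ls i)),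
    [/\ forall i, Ls i \subset K, forall i, translate_prod (m i)
      & z = \sum_(i < n) tr K (Ls i) (m i * r i)].
Proof.
move=> tiz; pose e0 : {L : {group gT} & (Tf L * Tf L)%type} := existT _ 1%G (0, 0).
suff [l [tpl ->]] : exists l : seq {L : {group gT} & (Tf L * Tf L)%type},
    (forall i, i < size l -> tag (nth e0 l i) \subset K /\
                              translate_prod (tagged (nth e0 l i)).1)%N /\
    z = \sum_(p <- l) tr K (tag p) ((tagged p).1 * (tagged p).2).
  exists (size l), (fun i => tag (nth e0 l i)), (fun i => (tagged (nth e0 l i)).1),
    (fun i => (tagged (nth e0 l i)).2).
  by split=> [i|i|]; [case: (tpl i (ltn_ord i)) | case: (tpl i (ltn_ord i)) |
    rewrite (big_nth e0) big_mkord].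
elim: tiz => [|u v _ [l1 [tp1 ->]] _ [l2 [tp2 ->]]|L m r sLK tpm].
- by exists [::]; rewrite big_nil.
- exists (l1 ++ l2); rewrite big_cat; split=> // i; rewrite size_cat nth_cat.
  case: ifP => [lt_i_l1 _ | /negbT le_l1_i lt_i]; first exact: tp1.
  by apply: tp2; rewrite ltn_subLR // leqNgt.
- by exists [:: existT _ L (m, r)]; rewrite big_seq1; split=> // [[]].
Qed.

Lemma translate_ideal_nm H K (z : Tf K) : K \subset H -> H \subset G ->
  translate_ideal z -> translate_ideal (nm H K z).
Proof.
move=> sKH sHG /translate_ideal_family[n [Ls [m [r [sLK tpm ->]]]]].
have sLG i : Ls i \subset G := subset_trans (sLK i) (subset_trans sKH sHG).
rewrite (reciprocity sKH sHG _ sLK); apply: translate_ideal_sum => O OHK.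
set s := pickd _ O; set S := sec_stab H s.
have sSH : S \subset H.
  by rewrite gen_subG; apply/subsetP=> h; rewrite inE => /andP[].
have sSG := subset_trans sSH sHG.
have OmK : [set (y *: K)%g | y in S] \in coset_orbits S K H.
  by apply/imsetP; exists (K : {set gT}) => //; apply/lcosetsP; exists 1%g; rewrite ?lcoset1.
have [p sp pH] := sec_orbits_pick sKH sLK OHK (coset_orbits_pick sSH OmK).
have pG := subsetP sHG _ pH.
(* The factor of each reciprocity summand at the orbit of the coset K itself
   is a product of translates of x times another element. *)
rewrite (bigD1 _ OmK) /= (recip_factorM _ _ sSG sLG sp pG) -mulrA.
apply: tiT => //; exact: recip_factor_translate sSG sLG tpm sp pG.
Qed.

Lemma translate_ideal_tambara : tambara_ideal (fun K (z : Tf K) => translate_ideal z).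
Proof.
split=> [K sKG | H K z | H K z | H K z | g H z].
- split=> [|u v|r u]; [exact: ti0 | exact: tiD | exact: translate_idealMl].
- exact: translate_ideal_res.
- exact: translate_ideal_tr.
- exact: translate_ideal_nm.
- exact: translate_ideal_cj.
Qed.

Lemma tideal_prin_translate K (z : Tf K) : tideal_prin x K z -> translate_ideal z.
Proof. by apply; [exact: translate_ideal_tambara | exact: translate_ideal_id]. Qed.

Lemma mult_translate_prin K (m : Tf K) :
  K \subset G -> mult_translate x m -> tideal_prin x K m.
Proof.
move=> sKG [K' [g [sK'H0 gG sgK'K ->]]] I [_ Ires _ Inm Icj] Ix.
have sK'G := subset_trans sK'H0 sH0G.
by apply: Inm => //; apply: Icj => //; apply: Ires.
Qed.

End Translates.

Lemma tideal_gen_tambara (S0 : tfamily Tf) : tambara_ideal (tideal_gen S0).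
Proof.
split=> [H sHG | H K u sKH sHG Su I hI hS | H K u sKH sHG Su I hI hS
        | H K u sKH sHG Su I hI hS | g H u gG sHG Su I hI hS].
- split=> [I hI _ | u v Su Sv I hI hS | r u Su I hI hS];
    have [/(_ H sHG) [I0 ID IM] _ _ _ _] := hI.
  + exact: I0.
  + exact: ID (Su I hI hS) (Sv I hI hS).
  + exact: IM (Su I hI hS).
- by have [_ Ires _ _ _] := hI; apply: Ires (Su I hI hS).
- by have [_ _ Itr _ _] := hI; apply: Itr (Su I hI hS).
- by have [_ _ _ Inm _] := hI; apply: Inm (Su I hI hS).
- by have [_ _ _ _ Icj] := hI; apply: Icj (Su I hI hS).
Qed.

Lemma tideal_gen_ring_ideal (S0 : tfamily Tf) K :
  K \subset G -> ring_ideal (tideal_gen S0 K).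
Proof. by move=> sKG; have [/(_ K sKG)] := tideal_gen_tambara S0. Qed.

Section Products.
Variables (H1 H2 : {group gT}) (a : Tf H1) (b : Tf H2).
Hypotheses (sH1G : H1 \subset G) (sH2G : H2 \subset G).
Local Notation J := (tideal_gen (gen_products a b)).

Lemma translate_prod_mul_gen L (m m' : Tf L) : L \subset G ->
  translate_prod a m -> translate_prod b m' -> J L (m * m').
Proof.
move=> sLG tpm; have [_ _ JM] := tideal_gen_ring_ideal (gen_products a b) sLG.
elim: tpm m' => [mu mu_a | u1 u2 _ _ _ IH2] m' tpm'.
  elim: tpm' => [nu nu_b | v1 v2 _ IHv1 _ _].
    by move=> I _ hS; apply: hS => //; split=> //; exists mu, nu.
  by rewrite mulrA mulrC; apply: JM.
by rewrite -mulrA; apply: JM; apply: IH2.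
Qed.

Lemma translate_prod_ideal_mul_gen L (m w : Tf L) : L \subset G ->
  translate_prod a m -> translate_ideal b w -> J L (m * w).
Proof.
move=> sLG tpm; have [J0 JD _] := tideal_gen_ring_ideal (gen_products a b) sLG.
have [_ _ Jtr _ _] := tideal_gen_tambara (gen_products a b).
elim=> [|u v _ Ju _ Jv|L' m' r sL'L tpm'].
- by rewrite mulr0.
- by rewrite mulrDr; apply: JD.
have sL'G := subset_trans sL'L sLG.
have [_ _ JM] := tideal_gen_ring_ideal (gen_products a b) sL'G.
rewrite mulrC -frobenius // mulrAC mulrC; apply: Jtr => //; apply: JM.
by rewrite mulrC; apply: translate_prod_mul_gen => //; apply: translate_prod_res.
Qed.

Lemma translate_ideal_mul_gen L (u v : Tf L) : L \subset G ->
  translate_ideal a u -> translate_ideal b v -> J L (u * v).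
Proof.
move=> sLG tiu tiv; have [J0 JD _] := tideal_gen_ring_ideal (gen_products a b) sLG.
have [_ _ Jtr _ _] := tideal_gen_tambara (gen_products a b).
elim: tiu => [|u1 u2 _ Ju1 _ Ju2|L' m r sL'L tpm].
- by rewrite mul0r.
- by rewrite mulrDl; apply: JD.
have sL'G := subset_trans sL'L sLG.
have [_ _ JM] := tideal_gen_ring_ideal (gen_products a b) sL'G.
rewrite -frobenius // mulrAC mulrC; apply: Jtr => //; apply: JM.
by apply: translate_prod_ideal_mul_gen => //; apply: translate_ideal_res.
Qed.

Lemma tideal_prin_mul_gen L (u v : Tf L) : L \subset G ->
  tideal_prin a L u -> tideal_prin b L v -> J L (u * v).
Proof.
move=> sLG /(tideal_prin_translate sH1G) tiu /(tideal_prin_translate sH2G) tiv.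
exact: translate_ideal_mul_gen.
Qed.

End Products.

End TambaraIdealProducts.

Theorem corollary4p19 (gT : finGroupType) (G : {group gT}) (Tf : tambara G)
    (H1 H2 : {group gT}) (hH1 : H1 \subset G) (hH2 : H2 \subset G)
    (a : Tf H1) (b : Tf H2) :
  forall (L : {group gT}), L \subset G -> forall z : Tf L,
    tideal_prod (tideal_prin a) (tideal_prin b) L z <-> tideal_gen (gen_products a b) L z.
Proof.
move=> L sLG z; split=> [prod_z | gen_z I hI hgen].
- apply: prod_z (tideal_gen_tambara _) _ => K sKG _ [n [u [v [uv_ab ->]]]].
  apply: ring_ideal_sum (tideal_gen_ring_ideal _ sKG) _ => k.
  by have [ua vb] := uv_ab k; apply: tideal_prin_mul_gen.
- apply: gen_z hI _ => K sKG _ [_ [mu [nu [mu_a nu_b ->]]]].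
  apply: hgen => //; exists 1%N, (fun=> mu), (fun=> nu); split; last by rewrite big_ord1.
  by split; apply: mult_translate_prin.
Qed.
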